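(* Consider $N$ disturbance-free systems $\dot x_i=f(x_i,u_i)$, $y_i=h(x_i)$, iOFP with some constant $\sigma\in\mathbb R$, over a connected undirected graph with incidence matrix $B$ and $E$ edges. Attach to each edge $g$ a passive system $\dot\eta_g=\psi_g(\eta_g,\varrho_g)$, $v_{1g}=\varphi_g(\eta_g,\varrho_g)$ with $\varrho_g=\sum_j b_{jg}y_j$, $\psi_g$ locally Lipschitz, $\varphi_g$ continuous, and a positive definite $\Psi_g$ with $\dot\Psi_g(\eta_g)\le v_{1g}^\top\varrho_g$. Apply $$\dot\kappa_g=\delta_g\varrho_g^\top\varrho_g,\quad v_{2g}=\kappa_g\varrho_g,\quad \delta_g>0,\quad g=1,\dots,E;\qquad u_i=-\sum_{g=1}^E b_{ig}(v_{1g}+v_{2g}),\quad i=1,\dots,N.$$ If the closed-loop solution $(x,\eta,\kappa)$ is bounded, then the outputs synchronize asymptotically: $\lim_{t\to\infty}\|y_i(t)-\bar y(t)\|=0$ for all $i$, where $\bar y=\frac1N\sum_j y_j$ (no condition relating $\lambda_2$ and $\sigma$ is required).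
   Context: $x_i\in\mathbb R^n$, $u_i,y_i\in\mathbb R^q$, $f$ locally Lipschitz, $h$ continuously differentiable. iOFP with constant $\sigma$ (disturbance-free): there exist continuously differentiable $\Phi\ge0$ and class-$\mathcal K_\infty$ $\underline\alpha,\overline\alpha$ with $\underline\alpha(\|x_i-x_i'\|)\le\Phi(x_i,x_i')\le\overline\alpha(\|x_i-x_i'\|)$ and $\frac{\partial\Phi}{\partial x_i}f(x_i,u_i)+\frac{\partial\Phi}{\partial x_i'}f(x_i',u_i')\le\sigma\|y_i-y_i'\|^2+(y_i-y_i')^\top(u_i-u_i')$. Graph: symmetric nonnegative adjacency $A=[a_{ij}]$, connected. Incidence matrix $B\in\mathbb R^{N\times E}$: for the $g$-th edge $(i,j)$, $b_{ig}=-\sqrt{a_{ij}}$, $b_{jg}=\sqrt{a_{ij}}$, other entries zero. *)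

From Stdlib Require Import Reals Lra Relations.
Open Scope R_scope.

(* Vectors in R^d are represented as functions nat -> R; only the
   components 0..d-1 are meaningful, and all norms/inner products
   below are taken over these components. *)
Definition vec := nat -> R.

Fixpoint sumR (n : nat) (F : nat -> R) : R :=
  match n with O => 0 | S k => sumR k F + F k end.

Definition dot (d : nat) (x y : vec) : R := sumR d (fun k => x k * y k).
Definition vnorm (d : nat) (x : vec) : R := sqrt (dot d x x).
Definition vadd (x y : vec) : vec := fun k => x k + y k.
Definition vsub (x y : vec) : vec := fun k => x k - y k.
Definition vzero : vec := fun _ => 0.

Definition continuous_map (d e : nat) (F : vec -> vec) : Prop :=
  forall x eps, eps > 0 -> exists del, del > 0 /\
    forall x', vnorm d (vsub x' x) < del -> vnorm e (vsub (F x') (F x)) < eps.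

Definition continuous_map2 (d p e : nat) (F : vec -> vec -> vec) : Prop :=
  forall x u eps, eps > 0 -> exists del, del > 0 /\
    forall x' u', vnorm d (vsub x' x) < del -> vnorm p (vsub u' u) < del ->
      vnorm e (vsub (F x' u') (F x u)) < eps.

Definition loc_lipschitz2 (d p e : nat) (F : vec -> vec -> vec) : Prop :=
  forall x u, exists r L, r > 0 /\
    forall x1 u1 x2 u2,
      vnorm d (vsub x1 x) < r -> vnorm p (vsub u1 u) < r ->
      vnorm d (vsub x2 x) < r -> vnorm p (vsub u2 u) < r ->
      vnorm e (vsub (F x1 u1) (F x2 u2)) <= L * (vnorm d (vsub x1 x2) + vnorm p (vsub u1 u2)).

Definition has_gradient (d : nat) (F : vec -> R) (G : vec -> vec) : Prop :=
  forall x eps, eps > 0 -> exists del, del > 0 /\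
    forall dx, vnorm d dx < del ->
      Rabs (F (vadd x dx) - F x - dot d (G x) dx) <= eps * vnorm d dx.

Definition C1 (d : nat) (F : vec -> R) : Prop :=
  exists G, has_gradient d F G /\ continuous_map d d G.

Definition C1_map (d e : nat) (h : vec -> vec) : Prop :=
  forall k, (k < e)%nat -> C1 d (fun x => h x k).

Definition has_gradient2 (d : nat) (Phi : vec -> vec -> R) (Gx Gx' : vec -> vec -> vec) : Prop :=
  forall x x' eps, eps > 0 -> exists del, del > 0 /\
    forall dx dx', vnorm d dx < del -> vnorm d dx' < del ->
      Rabs (Phi (vadd x dx) (vadd x' dx') - Phi x x'
            - dot d (Gx x x') dx - dot d (Gx' x x') dx')
        <= eps * (vnorm d dx + vnorm d dx').

Definition Kinf (al : R -> R) : Prop :=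
  al 0 = 0 /\
  (forall s, 0 <= s -> forall eps, eps > 0 -> exists del, del > 0 /\
     forall s', 0 <= s' -> Rabs (s' - s) < del -> Rabs (al s' - al s) < eps) /\
  (forall a b, 0 <= a -> a < b -> al a < al b) /\
  (forall M, exists s, 0 <= s /\ M <= al s).

Definition iOFP (n q : nat) (f : vec -> vec -> vec) (h : vec -> vec) (sigma : R) : Prop :=
  exists (Phi : vec -> vec -> R) (Gx Gx' : vec -> vec -> vec) (alo ahi : R -> R),
    has_gradient2 n Phi Gx Gx' /\ continuous_map2 n n n Gx /\ continuous_map2 n n n Gx' /\
    Kinf alo /\ Kinf ahi /\
    (forall x x', alo (vnorm n (vsub x x')) <= Phi x x' <= ahi (vnorm n (vsub x x'))) /\
    (forall x x' u u',
       dot n (Gx x x') (f x u) + dot n (Gx' x x') (f x' u')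
       <= sigma * (vnorm q (vsub (h x) (h x'))) ^ 2
          + dot q (vsub (h x) (h x')) (vsub u u')).

Definition sym_nonneg (N : nat) (a : nat -> nat -> R) : Prop :=
  forall i j, (i < N)%nat -> (j < N)%nat -> a i j = a j i /\ 0 <= a i j.

Definition graph_connected (N : nat) (a : nat -> nat -> R) : Prop :=
  forall i j, (i < N)%nat -> (j < N)%nat ->
    clos_refl_trans nat
      (fun u v => (u < N)%nat /\ (v < N)%nat /\ u <> v /\ a u v > 0) i j.

Definition edge_enum (N E : nat) (a : nat -> nat -> R) (src dst : nat -> nat) : Prop :=
  (forall g, (g < E)%nat ->
     (src g < N)%nat /\ (dst g < N)%nat /\ src g <> dst g /\ a (src g) (dst g) > 0) /\
  (forall i j, (i < N)%nat -> (j < N)%nat -> i <> j -> a i j > 0 ->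
     exists g, (g < E)%nat /\ ((src g = i /\ dst g = j) \/ (src g = j /\ dst g = i))) /\
  (forall g g', (g < E)%nat -> (g' < E)%nat ->
     ((src g = src g' /\ dst g = dst g') \/ (src g = dst g' /\ dst g = src g')) -> g = g').

Definition incidence (a : nat -> nat -> R) (src dst : nat -> nat) (i g : nat) : R :=
  if Nat.eq_dec i (src g) then - sqrt (a (src g) (dst g))
  else if Nat.eq_dec i (dst g) then sqrt (a (src g) (dst g))
  else 0.

Definition passive_edge (m q : nat) (psi phi : vec -> vec -> vec) : Prop :=
  loc_lipschitz2 m q m psi /\ continuous_map2 m q q phi /\
  exists (Psi : vec -> R) (GPsi : vec -> vec),
    has_gradient m Psi GPsi /\ continuous_map m m GPsi /\
    Psi vzero = 0 /\ (forall eta, vnorm m eta <> 0 -> Psi eta > 0) /\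
    (forall eta rho, dot m (GPsi eta) (psi eta rho) <= dot q (phi eta rho) rho).

Definition rho_sig (q N : nat) (b : nat -> nat -> R) (h : vec -> vec)
  (x : nat -> R -> vec) (g : nat) (t : R) : vec :=
  fun k => sumR N (fun j => b j g * h (x j t) k).

Definition u_sig (q N E : nat) (b : nat -> nat -> R) (h : vec -> vec)
  (phi : nat -> vec -> vec -> vec) (x eta : nat -> R -> vec) (kappa : nat -> R -> R)
  (i : nat) (t : R) : vec :=
  fun k => - sumR E (fun g =>
     b i g * (phi g (eta g t) (rho_sig q N b h x g t) k
              + kappa g t * rho_sig q N b h x g t k)).

Definition closed_loop_solution (n q N E : nat) (f : vec -> vec -> vec) (h : vec -> vec)
  (b : nat -> nat -> R) (m : nat -> nat) (psi phi : nat -> vec -> vec -> vec)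
  (delta : nat -> R) (x eta : nat -> R -> vec) (kappa : nat -> R -> R) : Prop :=
  forall t, t > 0 ->
    (forall i k, (i < N)%nat -> (k < n)%nat ->
       derivable_pt_lim (fun s => x i s k) t
         (f (x i t) (u_sig q N E b h phi x eta kappa i t) k)) /\
    (forall g k, (g < E)%nat -> (k < m g)%nat ->
       derivable_pt_lim (fun s => eta g s k) t
         (psi g (eta g t) (rho_sig q N b h x g t) k)) /\
    (forall g, (g < E)%nat ->
       derivable_pt_lim (kappa g) t
         (delta g * dot q (rho_sig q N b h x g t) (rho_sig q N b h x g t))).

Definition bounded_solution (n N E : nat) (m : nat -> nat)
  (x eta : nat -> R -> vec) (kappa : nat -> R -> R) : Prop :=
  exists M, forall t, t >= 0 ->
    (forall i k, (i < N)%nat -> (k < n)%nat -> Rabs (x i t k) <= M) /\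
    (forall g k, (g < E)%nat -> (k < m g)%nat -> Rabs (eta g t k) <= M) /\
    (forall g, (g < E)%nat -> Rabs (kappa g t) <= M).

Definition ybar (N : nat) (h : vec -> vec) (x : nat -> R -> vec) (t : R) : vec :=
  fun k => / INR N * sumR N (fun j => h (x j t) k).

From Pilot Require Import Defs.
From Stdlib Require Import Reals Lra Lia Relations List Classical ClassicalEpsilon FunctionalExtensionality.
From Coquelicot Require Import Compactness.
Open Scope R_scope.

(* Since [kappa_g' = delta_g |rho_g|^2 >= 0] and [kappa_g] is bounded, each [|rho_g|^2] is
   integrable on [0, oo). Boundedness of the state makes every closed-loop signal bounded
   (continuous maps are bounded on compact boxes), so the states are Lipschitz in time and
   [|rho_g|^2] is uniformly continuous; Barbalat's lemma then gives [rho_g -> 0]. On the edge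
   [g = (i, j)], [rho_g = sqrt a_ij (y_j - y_i)], so adjacent outputs merge; by connectivity
   all outputs merge, and each approaches their mean. The iOFP and passivity hypotheses are
   what one uses to prove the boundedness assumed here; they play no further role. *)

(** * Finite sums and norms *)

Lemma sumR_ext n F G : (forall k, (k < n)%nat -> F k = G k) -> sumR n F = sumR n G.
Proof.
  induction n as [|n IH]; simpl; intros H; auto.
  rewrite IH, H; auto.
Qed.

Lemma sumR_le n F G : (forall k, (k < n)%nat -> F k <= G k) -> sumR n F <= sumR n G.
Proof.
  induction n as [|n IH]; simpl; intros H; [lra|].
  apply Rplus_le_compat; [apply IH; intros k Hk|]; apply H; lia.
Qed.

Lemma sumR_const n c : sumR n (fun _ => c) = INR n * c.
Proof. induction n as [|n IH]; simpl sumR; [simpl; lra|]. rewrite IH, S_INR. lra. Qed.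

Lemma sumR_nonneg n F : (forall k, (k < n)%nat -> 0 <= F k) -> 0 <= sumR n F.
Proof.
  intros H. replace 0 with (sumR n (fun _ => 0)) by (rewrite sumR_const; lra).
  now apply sumR_le.
Qed.

Lemma sumR_plus n F G : sumR n (fun k => F k + G k) = sumR n F + sumR n G.
Proof. induction n as [|n IH]; simpl; [lra|]. rewrite IH. lra. Qed.

Lemma sumR_minus n F G : sumR n (fun k => F k - G k) = sumR n F - sumR n G.
Proof. induction n as [|n IH]; simpl; [lra|]. rewrite IH. lra. Qed.

Lemma sumR_scal n c F : sumR n (fun k => c * F k) = c * sumR n F.
Proof. induction n as [|n IH]; simpl; [lra|]. rewrite IH. lra. Qed.

Lemma Rabs_sumR n F : Rabs (sumR n F) <= sumR n (fun k => Rabs (F k)).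
Proof.
  induction n as [|n IH]; simpl; [rewrite Rabs_R0; lra|].
  eapply Rle_trans; [apply Rabs_triang | lra].
Qed.

Lemma sumR_ge_term n F k :
  (forall j, (j < n)%nat -> 0 <= F j) -> (k < n)%nat -> F k <= sumR n F.
Proof.
  induction n as [|n IH]; intros H Hk; [lia|]. simpl.
  assert (0 <= sumR n F) by (apply sumR_nonneg; intros; apply H; lia).
  destruct (Nat.eq_dec k n) as [->|Hkn]; [lra|].
  assert (F k <= sumR n F) by (apply IH; [intros; apply H|]; lia).
  assert (0 <= F n) by (apply H; lia). lra.
Qed.

Lemma sumR_add_range m p F : sumR (m + p) F = sumR m F + sumR p (fun k => F (m + k)%nat).
Proof.
  induction p as [|p IH]; simpl; [rewrite Nat.add_0_r; lra|].
  rewrite Nat.add_succ_r. simpl. rewrite IH. lra.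
Qed.

Lemma sumR_indicator N p F : (p < N)%nat ->
  sumR N (fun j => if Nat.eq_dec j p then F j else 0) = F p.
Proof.
  induction N as [|N IH]; intros Hp; [lia|]. simpl.
  destruct (Nat.eq_dec N p) as [<-|HNp]; [|rewrite IH by lia; lra].
  rewrite (sumR_ext _ _ (fun _ => 0)), sumR_const; [lra|].
  intros k Hk. destruct (Nat.eq_dec k N); [lia | reflexivity].
Qed.

Definition l1 (d : nat) (v : vec) : R := sumR d (fun k => Rabs (v k)).
Definition inbox (d : nat) (M : R) (x : vec) : Prop := forall k, (k < d)%nat -> Rabs (x k) <= M.
Definition agree (d : nat) (x y : vec) : Prop := forall k, (k < d)%nat -> x k = y k.

Lemma l1_nonneg d v : 0 <= l1 d v.
Proof. apply sumR_nonneg. intros; apply Rabs_pos. Qed.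

Lemma vnorm_nonneg d v : 0 <= vnorm d v.
Proof. apply sqrt_pos. Qed.

Lemma dot_self_nonneg d v : 0 <= dot d v v.
Proof. apply sumR_nonneg. intros; apply Rle_0_sqr. Qed.

Lemma Rabs_le_vnorm d v k : (k < d)%nat -> Rabs (v k) <= vnorm d v.
Proof.
  intros Hk. unfold vnorm. rewrite <- sqrt_Rsqr_abs. apply sqrt_le_1_alt.
  apply (sumR_ge_term d (fun k => v k * v k)); auto. intros; apply Rle_0_sqr.
Qed.

Lemma Rabs_le_l1 d v k : (k < d)%nat -> Rabs (v k) <= l1 d v.
Proof. intros Hk. apply (sumR_ge_term d (fun k => Rabs (v k))); auto. intros; apply Rabs_pos. Qed.

Lemma vnorm_le_l1 d v : vnorm d v <= l1 d v.
Proof.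
  unfold vnorm. rewrite <- (sqrt_square (l1 d v)) by apply l1_nonneg. apply sqrt_le_1_alt.
  induction d as [|d IH]; unfold dot, l1 in *; simpl; [lra|].
  pose proof (l1_nonneg d v). pose proof (Rabs_pos (v d)).
  assert (v d * v d = Rabs (v d) * Rabs (v d)) by (rewrite <- Rabs_mult, Rabs_right; auto; apply Rle_ge, Rle_0_sqr).
  unfold l1 in *. nra.
Qed.

Lemma l1_le_bound d v c : (forall k, (k < d)%nat -> Rabs (v k) <= c) -> l1 d v <= INR d * c.
Proof. intros H. rewrite <- sumR_const. now apply sumR_le. Qed.

Lemma l1_triangle d x y z : l1 d (vsub x z) <= l1 d (vsub x y) + l1 d (vsub y z).
Proof.
  unfold l1. rewrite <- sumR_plus. apply sumR_le. intros k _. unfold vsub.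
  replace (x k - z k) with ((x k - y k) + (y k - z k)) by ring. apply Rabs_triang.
Qed.

Lemma vnorm_agree d x y : agree d x y -> vnorm d (vsub x y) = 0.
Proof.
  intros H. apply Rle_antisym; [|apply vnorm_nonneg].
  eapply Rle_trans; [apply vnorm_le_l1|]. unfold l1.
  rewrite (sumR_ext _ _ (fun _ => 0)), sumR_const; [lra|].
  intros k Hk. unfold vsub. rewrite H, Rminus_diag, Rabs_R0; auto.
Qed.

Lemma Rabs_dot_le d u v : Rabs (dot d u v) <= l1 d u * vnorm d v.
Proof.
  unfold dot, l1. eapply Rle_trans; [apply Rabs_sumR|].
  rewrite Rmult_comm, <- sumR_scal. apply sumR_le. intros k Hk.
  rewrite Rabs_mult, Rmult_comm. apply Rmult_le_compat_r; [apply Rabs_pos|].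
  now apply Rabs_le_vnorm.
Qed.

(** * Compactness of boxes *)

Definition upward_closed {T} (P : T -> R -> Prop) : Prop :=
  forall x B B', P x B -> B <= B' -> P x B'.

Lemma uniform_bound_list {T} (P : T -> R -> Prop) (l : list T) : upward_closed P ->
  (forall t, In t l -> exists B, P t B) -> exists B, forall t, In t l -> P t B.
Proof.
  intros Hm. induction l as [|t0 l IH]; intros H; [exists 0; intros t []|].
  destruct (H t0 (in_eq t0 l)) as [B0 H0].
  destruct IH as [B1 H1]; [intros t Ht; apply H, in_cons, Ht|].
  exists (Rmax B0 B1). intros t [<-|Ht]; eapply Hm.
  - apply H0.
  - apply Rmax_l.
  - apply H1, Ht.
  - apply Rmax_r.
Qed.

Lemma uniform_bound_below (P : nat -> R -> Prop) (E : nat) : upward_closed P ->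
  (forall g, (g < E)%nat -> exists B, P g B) -> exists B, forall g, (g < E)%nat -> P g B.
Proof.
  intros Hm H. destruct (uniform_bound_list P (seq 0 E) Hm) as [B HB].
  - intros g Hg. apply in_seq in Hg. apply H. lia.
  - exists B. intros g Hg. apply HB, in_seq. lia.
Qed.

(* Coquelicot's finite subcover theorem [compactness_list] is stated for tuples [Tn d R]. *)
Fixpoint tuple_of (d : nat) (v : vec) : Tn d R :=
  match d with O => tt | S d => (v O, tuple_of d (fun k => v (S k))) end.

Fixpoint vec_of (d : nat) : Tn d R -> vec :=
  match d with
  | O => fun _ _ => 0
  | S d => fun t k => match k with O => fst t | S k => vec_of d (snd t) k end
  end.

Lemma bounded_n_tuple_of d M v : inbox d M v ->
  bounded_n d (tuple_of d (fun _ => - M)) (tuple_of d (fun _ => M)) (tuple_of d v).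
Proof.
  revert v. induction d as [|d IH]; intros v Hv; simpl; [exact I|]. split.
  - pose proof (Hv O ltac:(lia)). unfold Rabs in *. destruct Rcase_abs; lra.
  - apply IH. intros k Hk. apply Hv. lia.
Qed.

Lemma close_n_tuple_of d r v t : close_n d r (tuple_of d v) t ->
  forall k, (k < d)%nat -> Rabs (v k - vec_of d t k) < r.
Proof.
  revert v. induction d as [|d IH]; intros v Hc k Hk; [lia|].
  destruct t as [t0 t']. destruct Hc as [H0 Hc]. destruct k as [|k]; [exact H0|].
  apply (IH t' (fun k => v (S k)) Hc). lia.
Qed.

Lemma box_local_to_uniform d (P : vec -> R -> Prop) : upward_closed P ->
  (forall x, exists r B, r > 0 /\ forall y, l1 d (vsub y x) < r -> P y B) ->
  forall M, exists B, forall x, inbox d M x -> P x B.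
Proof.
  intros Hm Hloc M.
  assert (Hrad : forall x, {rB : R * R | fst rB > 0 /\
                   forall y, l1 d (vsub y x) < fst rB -> P y (snd rB)}).
  { intros x. apply constructive_indefinite_description.
    destruct (Hloc x) as (r & B & Hr & HB). now exists (r, B). }
  pose (rad x := fst (proj1_sig (Hrad x))).
  assert (Hrad_pos : forall x, 0 < rad x) by (intros x; apply (proj2_sig (Hrad x))).
  assert (Hdelta : forall t, 0 < rad (vec_of d t) / (INR d + 1)).
  { intros t. apply Rdiv_lt_0_compat; [apply Hrad_pos | pose proof (pos_INR d); lra]. }
  apply NNPP. intros Hno.
  apply (compactness_list d (tuple_of d (fun _ => - M)) (tuple_of d (fun _ => M))
           (fun t => mkposreal _ (Hdelta t))).
  intros [l Hcover]. apply Hno.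
  destruct (uniform_bound_list
              (fun t B => forall y, l1 d (vsub y (vec_of d t)) < rad (vec_of d t) -> P y B) l)
    as [B HB].
  - intros t B B' H HBB' y Hy. eapply Hm; [apply H, Hy | exact HBB'].
  - intros t _. exists (snd (proj1_sig (Hrad (vec_of d t)))). apply (proj2_sig (Hrad _)).
  - exists B. intros x Hx.
    destruct (Hcover (tuple_of d x) (bounded_n_tuple_of d M x Hx)) as (t & Hin & _ & Hclose).
    apply (HB t Hin).
    eapply Rle_lt_trans.
    { apply l1_le_bound. intros k Hk. left. exact (close_n_tuple_of _ _ _ _ Hclose k Hk). }
    pose proof (pos_INR d). pose proof (Hrad_pos (vec_of d t)). simpl.
    apply (Rmult_lt_reg_r (INR d + 1)); [lra|].
    field_simplify; lra.
Qed.

Definition locally_bounded2 (d p e : nat) (F : vec -> vec -> vec) : Prop :=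
  forall x u, exists r C, r > 0 /\ forall x' u',
    vnorm d (vsub x' x) < r -> vnorm p (vsub u' u) < r -> vnorm e (vsub (F x' u') (F x u)) <= C.

(* Maps on [vec] are allowed to look at components beyond the dimension; continuity
   rules this out, which is what lets a pair of boxes be glued into one box. *)
Definition respects_agree (d p e : nat) (F : vec -> vec -> vec) : Prop :=
  forall x x' u u', agree d x' x -> agree p u' u -> agree e (F x' u') (F x u).

Lemma continuous_map2_locally_bounded d p e F :
  continuous_map2 d p e F -> locally_bounded2 d p e F.
Proof.
  intros Hc x u. destruct (Hc x u 1) as (del & Hdel & H); [lra|].
  exists del, 1. split; [exact Hdel|]. intros. now apply Rlt_le, H.
Qed.

Lemma loc_lipschitz2_locally_bounded d p e F :
  loc_lipschitz2 d p e F -> locally_bounded2 d p e F.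
Proof.
  intros Hl x u. destruct (Hl x u) as (r & L & Hr & H).
  exists r, (Rabs L * (2 * r)). split; [exact Hr|]. intros x' u' Hx' Hu'.
  specialize (H x' u' x u Hx' Hu').
  rewrite (vnorm_agree d x x), (vnorm_agree p u u) in H by easy.
  specialize (H Hr Hr). pose proof (vnorm_nonneg d (vsub x' x)). pose proof (vnorm_nonneg p (vsub u' u)).
  eapply Rle_trans; [apply H|]. eapply Rle_trans; [apply Rmult_le_compat_r; [lra | apply Rle_abs]|].
  apply Rmult_le_compat_l; [apply Rabs_pos | lra].
Qed.

Lemma continuous_map2_respects_agree d p e F :
  continuous_map2 d p e F -> respects_agree d p e F.
Proof.
  intros Hc x x' u u' Hx Hu k Hk. apply Rminus_diag_uniq.
  destruct (Req_dec (F x' u' k - F x u k) 0) as [|Hne]; [easy|].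
  apply Rabs_pos_lt in Hne.
  destruct (Hc x u _ Hne) as (del & Hdel & H). specialize (H x' u').
  rewrite !vnorm_agree in H by easy.
  pose proof (Rabs_le_vnorm e (vsub (F x' u') (F x u)) k Hk). specialize (H Hdel Hdel).
  unfold vsub in *. lra.
Qed.

Lemma loc_lipschitz2_respects_agree d p e F :
  loc_lipschitz2 d p e F -> respects_agree d p e F.
Proof.
  intros Hl x x' u u' Hx Hu k Hk. apply Rminus_diag_uniq.
  destruct (Hl x u) as (r & L & Hr & H). specialize (H x' u' x u).
  rewrite !vnorm_agree in H by easy. rewrite Rplus_0_r, Rmult_0_r in H.
  specialize (H Hr Hr Hr Hr). pose proof (Rabs_le_vnorm e (vsub (F x' u') (F x u)) k Hk).
  unfold vsub, Rabs in *. destruct Rcase_abs; lra.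
Qed.

Lemma Rabs_le_l1_vnorm e v w k : (k < e)%nat -> Rabs (v k) <= l1 e w + vnorm e (vsub v w).
Proof.
  intros Hk. replace (v k) with (w k + vsub v w k) by (unfold vsub; ring).
  eapply Rle_trans; [apply Rabs_triang|].
  apply Rplus_le_compat; [apply Rabs_le_l1 | apply Rabs_le_vnorm]; exact Hk.
Qed.

Lemma bounded_on_boxes2 d p e F : locally_bounded2 d p e F -> respects_agree d p e F ->
  forall M1 M2, exists B, forall x u, inbox d M1 x -> inbox p M2 u ->
    forall k, (k < e)%nat -> Rabs (F x u k) <= B.
Proof.
  intros Hloc Hag M1 M2.
  pose (shift := fun (z : vec) k => z (d + k)%nat).
  destruct (box_local_to_uniform (d + p)
     (fun z B => forall k, (k < e)%nat -> Rabs (F z (shift z) k) <= B)) with (M := Rmax M1 M2)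
    as [B HB].
  - intros z B B' H HB k Hk. eapply Rle_trans; [apply H, Hk | exact HB].
  - intros z. destruct (Hloc z (shift z)) as (r & C & Hr & HC).
    exists r, (l1 e (F z (shift z)) + C). split; [exact Hr|]. intros y Hy k Hk.
    eapply Rle_trans; [apply (Rabs_le_l1_vnorm e _ (F z (shift z))), Hk|].
    apply Rplus_le_compat_l.
    assert (Hsplit : l1 (d + p) (vsub y z) = l1 d (vsub y z) + l1 p (vsub (shift y) (shift z)))
      by (unfold l1; apply sumR_add_range).
    pose proof (l1_nonneg d (vsub y z)). pose proof (l1_nonneg p (vsub (shift y) (shift z))).
    apply HC; (eapply Rle_lt_trans; [apply vnorm_le_l1 | lra]).
  - exists B. intros x u Hx Hu k Hk.
    pose (z := fun k => if Compare_dec.lt_dec k d then x k else u (k - d)%nat).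
    assert (Hz : inbox (d + p) (Rmax M1 M2) z).
    { intros j Hj. unfold z. destruct (Compare_dec.lt_dec j d).
      - eapply Rle_trans; [apply Hx; auto | apply Rmax_l].
      - eapply Rle_trans; [apply Hu; lia | apply Rmax_r]. }
    assert (Hzx : agree d z x).
    { intros j Hj. unfold z. destruct (Compare_dec.lt_dec j d); [easy | lia]. }
    assert (Hzu : agree p (shift z) u).
    { intros j Hj. unfold shift, z. destruct (Compare_dec.lt_dec (d + j) d); [lia|]. f_equal; lia. }
    rewrite <- (Hag x z u (shift z) Hzx Hzu k Hk). now apply HB.
Qed.

Lemma unif_continuous_on_box d (G : vec -> R) :
  (forall x eps, eps > 0 -> exists del, del > 0 /\
     forall x', l1 d (vsub x' x) < del -> Rabs (G x' - G x) < eps) ->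
  forall M eps, eps > 0 -> exists del, del > 0 /\
    forall x x', inbox d M x -> l1 d (vsub x' x) < del -> Rabs (G x' - G x) < eps.
Proof.
  intros Hc M eps Heps.
  (* the radius [1 / (1 + B)] shrinks as [B] grows, making the property upward closed *)
  destruct (box_local_to_uniform d (fun x B => 0 <= B /\
      forall x', (1 + B) * l1 d (vsub x' x) < 1 -> Rabs (G x' - G x) < eps)) with (M := M)
    as [B HB].
  - intros x B B' [HB0 H] HBB'. split; [lra|]. intros x' Hx'. apply H.
    pose proof (l1_nonneg d (vsub x' x)). nra.
  - intros x0. destruct (Hc x0 (eps / 2)) as (d0 & Hd0 & H0); [lra|].
    exists (d0 / 2), (2 / d0). split; [lra|]. intros y Hy.
    split; [apply Rlt_le, Rdiv_lt_0_compat; lra|]. intros x' Hx'.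
    assert (Hx'y : l1 d (vsub x' y) < d0 / 2).
    { pose proof (l1_nonneg d (vsub x' y)).
      apply (Rmult_lt_reg_l (1 + 2 / d0)); [apply Rplus_lt_le_0_compat; [lra|]; apply Rlt_le, Rdiv_lt_0_compat; lra|].
      replace ((1 + 2 / d0) * (d0 / 2)) with (d0 / 2 + 1) by (field; lra). lra. }
    pose proof (l1_triangle d x' y x0).
    assert (Rabs (G x' - G x0) < eps / 2) by (apply H0; lra).
    assert (Rabs (G y - G x0) < eps / 2) by (apply H0; lra).
    replace (G x' - G y) with ((G x' - G x0) - (G y - G x0)) by ring.
    eapply Rle_lt_trans; [apply Rabs_triang|]. rewrite Rabs_Ropp. lra.
  - exists (/ (1 + Rabs B)). split; [apply Rinv_0_lt_compat; pose proof (Rabs_pos B); lra|].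
    intros x x' Hx Hx'. destruct (HB x Hx) as [HB0 H]. apply H.
    rewrite Rabs_right in Hx' by lra.
    apply (Rmult_lt_compat_l (1 + B)) in Hx'; [|lra]. rewrite Rinv_r in Hx' by lra. exact Hx'.
Qed.

Section C1_function.

Variables (n : nat) (G : vec -> R).
Hypothesis HG : Defs.C1 n G.

Lemma C1_locally_lipschitz x : exists r L, r > 0 /\ L >= 0 /\
  forall x', vnorm n (vsub x' x) < r -> Rabs (G x' - G x) <= L * vnorm n (vsub x' x).
Proof.
  destruct HG as (DG & Hgrad & _). destruct (Hgrad x 1) as (del & Hdel & H); [lra|].
  exists del, (1 + l1 n (DG x)). split; [exact Hdel|]. split; [pose proof (l1_nonneg n (DG x)); lra|].
  intros x' Hx'. specialize (H (vsub x' x) Hx').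
  replace (vadd x (vsub x' x)) with x' in H
    by (apply functional_extensionality; intros k; unfold vadd, vsub; ring).
  pose proof (Rabs_dot_le n (DG x) (vsub x' x)).
  replace (G x' - G x) with ((G x' - G x - dot n (DG x) (vsub x' x)) + dot n (DG x) (vsub x' x)) by ring.
  eapply Rle_trans; [apply Rabs_triang | lra].
Qed.

Lemma C1_continuous_l1 x eps : eps > 0 -> exists del, del > 0 /\
  forall x', l1 n (vsub x' x) < del -> Rabs (G x' - G x) < eps.
Proof.
  intros Heps. destruct (C1_locally_lipschitz x) as (r & L & Hr & HL & H).
  exists (Rmin r (eps / (L + 1))). split; [apply Rmin_glb_lt; [lra | apply Rdiv_lt_0_compat; lra]|].
  intros x' Hx'. pose proof (vnorm_le_l1 n (vsub x' x)). pose proof (vnorm_nonneg n (vsub x' x)).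
  pose proof (Rmin_l r (eps / (L + 1))). pose proof (Rmin_r r (eps / (L + 1))).
  eapply Rle_lt_trans; [apply H; lra|].
  assert (Hsmall : (L + 1) * vnorm n (vsub x' x) < eps).
  { replace eps with ((L + 1) * (eps / (L + 1))) by (field; lra). apply Rmult_lt_compat_l; lra. }
  nra.
Qed.

End C1_function.

(** * Uniform continuity and Barbalat's lemma *)

(* Uniform continuity on [1, +oo): staying away from [t = 0], where the closed-loop
   equations are not assumed, lets the mean value theorem be used on every interval. *)
Definition ucont_tail (F : R -> R) : Prop :=
  forall eps, eps > 0 -> exists del, del > 0 /\
    forall t s, 1 <= t -> 1 <= s -> Rabs (t - s) < del -> Rabs (F t - F s) < eps.

Lemma ucont_tail_const c : ucont_tail (fun _ => c).
Proof. intros eps Heps. exists 1. split; [lra|]. intros. rewrite Rminus_diag, Rabs_R0. lra. Qed.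

Lemma ucont_tail_plus F G : ucont_tail F -> ucont_tail G -> ucont_tail (fun t => F t + G t).
Proof.
  intros HF HG eps Heps.
  destruct (HF (eps / 2)) as (d1 & Hd1 & H1); [lra|]. destruct (HG (eps / 2)) as (d2 & Hd2 & H2); [lra|].
  exists (Rmin d1 d2). split; [now apply Rmin_glb_lt|]. intros t s Ht Hs Hts.
  pose proof (Rmin_l d1 d2). pose proof (Rmin_r d1 d2).
  assert (Rabs (F t - F s) < eps / 2) by (apply H1; auto; lra).
  assert (Rabs (G t - G s) < eps / 2) by (apply H2; auto; lra).
  replace (F t + G t - (F s + G s)) with ((F t - F s) + (G t - G s)) by ring.
  eapply Rle_lt_trans; [apply Rabs_triang | lra].
Qed.

Lemma ucont_tail_sum N (F : nat -> R -> R) : (forall j, (j < N)%nat -> ucont_tail (F j)) ->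
  ucont_tail (fun t => sumR N (fun j => F j t)).
Proof.
  induction N as [|N IH]; intros H; [exact (ucont_tail_const 0)|].
  apply (ucont_tail_plus (fun t => sumR N (fun j => F j t)) (F N)); [apply IH; intros|]; apply H; lia.
Qed.

Lemma ucont_tail_scal c F : ucont_tail F -> ucont_tail (fun t => c * F t).
Proof.
  intros HF eps Heps. pose proof (Rabs_pos c) as Hc.
  destruct (HF (eps / (Rabs c + 1))) as (del & Hdel & H); [apply Rdiv_lt_0_compat; lra|].
  exists del. split; [exact Hdel|]. intros t s Ht Hs Hts. specialize (H t s Ht Hs Hts).
  replace (c * F t - c * F s) with (c * (F t - F s)) by ring. rewrite Rabs_mult.
  pose proof (Rabs_pos (F t - F s)).
  assert ((Rabs c + 1) * (eps / (Rabs c + 1)) = eps) by (field; lra). nra.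
Qed.

Lemma ucont_tail_mult F G A : ucont_tail F -> ucont_tail G ->
  (forall t, 1 <= t -> Rabs (F t) <= A) -> (forall t, 1 <= t -> Rabs (G t) <= A) ->
  ucont_tail (fun t => F t * G t).
Proof.
  intros HF HG BF BG eps Heps.
  assert (HA : 0 < Rabs A + 1) by (pose proof (Rabs_pos A); lra).
  pose (e' := eps / (2 * (Rabs A + 1))).
  assert (He' : e' > 0) by (apply Rdiv_lt_0_compat; lra).
  destruct (HF e' He') as (d1 & Hd1 & H1). destruct (HG e' He') as (d2 & Hd2 & H2).
  exists (Rmin d1 d2). split; [now apply Rmin_glb_lt|]. intros t s Ht Hs Hts.
  pose proof (Rmin_l d1 d2). pose proof (Rmin_r d1 d2).
  assert (Rabs (F t - F s) < e') by (apply H1; auto; lra).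
  assert (Rabs (G t - G s) < e') by (apply H2; auto; lra).
  assert (Rabs (F t) <= Rabs A + 1) by (pose proof (BF t Ht); pose proof (Rle_abs A); lra).
  assert (Rabs (G s) <= Rabs A + 1) by (pose proof (BG s Hs); pose proof (Rle_abs A); lra).
  assert ((Rabs A + 1) * e' = eps / 2) by (unfold e'; field; lra).
  replace (F t * G t - F s * G s) with (F t * (G t - G s) + G s * (F t - F s)) by ring.
  eapply Rle_lt_trans; [apply Rabs_triang|]. rewrite !Rabs_mult.
  pose proof (Rabs_pos (F t)). pose proof (Rabs_pos (G s)).
  pose proof (Rabs_pos (F t - F s)). pose proof (Rabs_pos (G t - G s)). nra.
Qed.

Lemma lipschitz_of_bounded_deriv (F F' : R -> R) L :
  (forall t, t > 0 -> derivable_pt_lim F t (F' t)) -> (forall t, t >= 1 -> Rabs (F' t) <= L) ->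
  forall t s, 1 <= t -> 1 <= s -> Rabs (F t - F s) <= L * Rabs (t - s).
Proof.
  intros HD HB.
  assert (Hle : forall t s, 1 <= s -> s < t -> Rabs (F t - F s) <= L * Rabs (t - s)).
  { intros t s Hs Hst.
    destruct (MVT_cor2 F F' s t) as (c & Hc & Hcst); [exact Hst | intros c Hc; apply HD; lra|].
    rewrite Hc, Rabs_mult. apply Rmult_le_compat_r; [apply Rabs_pos | apply HB; lra]. }
  intros t s Ht Hs. destruct (Rtotal_order s t) as [Hst | [-> | Hts]].
  - now apply Hle.
  - rewrite !Rminus_diag, Rabs_R0. pose proof (Rabs_pos (F' t)). pose proof (HB t ltac:(lra)). lra.
  - rewrite (Rabs_minus_sym (F t)), (Rabs_minus_sym t). now apply Hle.
Qed.

Lemma ucont_tail_comp_box d (G : vec -> R) (y : R -> vec) M L :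
  (forall x eps, eps > 0 -> exists del, del > 0 /\
     forall x', l1 d (vsub x' x) < del -> Rabs (G x' - G x) < eps) ->
  (forall t, 1 <= t -> inbox d M (y t)) ->
  (forall k t s, (k < d)%nat -> 1 <= t -> 1 <= s -> Rabs (y t k - y s k) <= L * Rabs (t - s)) ->
  ucont_tail (fun t => G (y t)).
Proof.
  intros HG Hbox Hlip eps Heps.
  destruct (unif_continuous_on_box d G HG M eps Heps) as (del & Hdel & H).
  pose (K := INR d * Rabs L + 1).
  assert (HK : K > 0) by (pose proof (pos_INR d); pose proof (Rabs_pos L); unfold K; nra).
  exists (del / K). split; [now apply Rdiv_lt_0_compat|]. intros t s Ht Hs Hts.
  apply H; [now apply Hbox|].
  eapply Rle_lt_trans.
  { apply (l1_le_bound d _ (Rabs L * Rabs (t - s))). intros k Hk.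
    eapply Rle_trans; [apply Hlip; auto|]. apply Rmult_le_compat_r; [apply Rabs_pos | apply Rle_abs]. }
  pose proof (pos_INR d). pose proof (Rabs_pos L). pose proof (Rabs_pos (t - s)).
  assert (INR d * (Rabs L * Rabs (t - s)) <= K * Rabs (t - s)) by (unfold K; nra).
  assert (K * Rabs (t - s) < K * (del / K)) by (apply Rmult_lt_compat_l; lra).
  replace (K * (del / K)) with del in * by (field; lra). lra.
Qed.

Lemma nondecreasing_of_nonneg_deriv (F F' : R -> R) :
  (forall t, t > 0 -> derivable_pt_lim F t (F' t)) -> (forall t, t > 0 -> 0 <= F' t) ->
  forall t1 t2, 0 < t1 -> t1 <= t2 -> F t1 <= F t2.
Proof.
  intros HD Hpos t1 t2 H1 H12. destruct (Req_dec t1 t2) as [->|Hne]; [lra|].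
  destruct (MVT_cor2 F F' t1 t2) as (c & Hc & Hct); [lra | intros c Hc; apply HD; lra|].
  assert (0 <= F' c * (t2 - t1)) by (apply Rmult_le_pos; [apply Hpos|]; lra). lra.
Qed.

(* Each excursion of [ph] above [eps] lasts a fixed time and raises [kap] by a fixed
   amount, which the bound on [kap] allows only finitely often. *)
Lemma barbalat (kap ph : R -> R) dl M : dl > 0 ->
  (forall t, t > 0 -> derivable_pt_lim kap t (dl * ph t)) -> (forall t, 0 <= ph t) ->
  ucont_tail ph -> (forall t, t >= 0 -> Rabs (kap t) <= M) ->
  forall eps, eps > 0 -> exists T, forall t, t >= T -> ph t < eps.
Proof.
  intros Hdl HD Hph Huc Hbnd eps Heps. apply NNPP. intros Hno.
  assert (Hoften : forall T, exists t, t >= T /\ ph t >= eps).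
  { intros T. apply NNPP. intros Hn. apply Hno. exists T. intros t Ht.
    apply Rnot_le_lt. intros Hle. apply Hn. exists t. split; [exact Ht | lra]. }
  assert (Hmono : forall t1 t2, 0 < t1 -> t1 <= t2 -> kap t1 <= kap t2).
  { apply (nondecreasing_of_nonneg_deriv kap (fun t => dl * ph t) HD).
    intros t _. apply Rmult_le_pos; [lra | apply Hph]. }
  destruct (Huc (eps / 2)) as (del & Hdel & Hu); [lra|].
  pose (tau := del / 2). pose (c0 := dl * (eps / 2) * tau).
  assert (Hc0 : c0 > 0) by (unfold c0, tau; apply Rmult_lt_0_compat; [apply Rmult_lt_0_compat|]; lra).
  assert (Hstep : forall t, 1 <= t -> ph t >= eps -> kap (t + tau) >= kap t + c0).
  { intros t Ht Hpt.
    destruct (MVT_cor2 kap (fun t => dl * ph t) t (t + tau)) as (c & Hc & Hct);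
      [unfold tau; lra | intros; apply HD; lra|].
    assert (Hpc : ph c > eps / 2).
    { assert (Rabs (ph c - ph t) < eps / 2) by (apply Hu; try lra; rewrite Rabs_right; unfold tau in *; lra).
      unfold Rabs in *. destruct Rcase_abs; lra. }
    replace (t + tau - t) with tau in Hc by ring.
    assert (dl * (eps / 2) * tau <= dl * ph c * tau)
      by (apply Rmult_le_compat_r; [unfold tau; lra | apply Rmult_le_compat_l; lra]).
    unfold c0. lra. }
  assert (Hgrow : forall k : nat, exists t, 1 <= t /\ kap t >= kap 1 + INR k * c0).
  { induction k as [|k [t [Ht Hkt]]]; [exists 1; simpl; lra|].
    destruct (Hoften t) as (s & Hs & Hps).
    exists (s + tau). split; [unfold tau; lra|]. rewrite S_INR.
    pose proof (Hstep s ltac:(lra) Hps). pose proof (Hmono t s ltac:(lra) ltac:(lra)). lra. }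
  destruct (INR_unbounded ((2 * M + 1) / c0)) as [k Hk].
  destruct (Hgrow k) as (t & Ht & Hkt).
  assert (Hlarge : INR k * c0 > 2 * M + 1).
  { apply (Rmult_lt_compat_r c0) in Hk; [|exact Hc0].
    unfold Rdiv in Hk. rewrite Rmult_assoc, Rinv_l in Hk; lra. }
  pose proof (Hbnd t ltac:(lra)). pose proof (Hbnd 1 ltac:(lra)).
  unfold Rabs in *. do 2 destruct Rcase_abs; lra.
Qed.

(** * Synchronization of the closed loop *)

Lemma Rabs_incidence_le a src dst j g : Rabs (incidence a src dst j g) <= sqrt (a (src g) (dst g)).
Proof.
  pose proof (sqrt_pos (a (src g) (dst g))). unfold incidence.
  destruct (Nat.eq_dec j (src g)); [rewrite Rabs_Ropp|destruct (Nat.eq_dec j (dst g))];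
    rewrite ?Rabs_R0, ?Rabs_right; lra.
Qed.

Lemma incidence_sum N a src dst g (Y : nat -> R) :
  (src g < N)%nat -> (dst g < N)%nat -> src g <> dst g ->
  sumR N (fun j => incidence a src dst j g * Y j) = sqrt (a (src g) (dst g)) * (Y (dst g) - Y (src g)).
Proof.
  intros Hs Hd Hne. set (c := sqrt (a (src g) (dst g))).
  rewrite (sumR_ext _ _ (fun j => (if Nat.eq_dec j (src g) then - c * Y j else 0)
                                 + (if Nat.eq_dec j (dst g) then c * Y j else 0))).
  - rewrite sumR_plus, (sumR_indicator N (src g) (fun j => - c * Y j)),
      (sumR_indicator N (dst g) (fun j => c * Y j)) by assumption. ring.
  - intros j Hj. unfold incidence. fold c.
    destruct (Nat.eq_dec j (src g)); destruct (Nat.eq_dec j (dst g)); try lia; ring.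
Qed.

Definition merging (q : nat) (Y : nat -> R -> vec) (i j : nat) : Prop :=
  forall eps, eps > 0 -> exists T, forall t, t >= T ->
    forall k, (k < q)%nat -> Rabs (Y i t k - Y j t k) < eps.

Lemma merging_sym q Y i j : merging q Y i j -> merging q Y j i.
Proof.
  intros H eps Heps. destruct (H eps Heps) as [T HT]. exists T. intros t Ht k Hk.
  rewrite Rabs_minus_sym. now apply HT.
Qed.

Lemma merging_clos_refl_trans q Y (adj : nat -> nat -> Prop) :
  (forall i j, adj i j -> merging q Y i j) ->
  forall i j, clos_refl_trans nat adj i j -> merging q Y i j.
Proof.
  intros Hadj i j Hij. induction Hij as [i j Hij | i | i j l _ IH1 _ IH2].
  - now apply Hadj.
  - intros eps Heps. exists 0. intros. rewrite Rminus_diag, Rabs_R0. lra.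
  - intros eps Heps.
    destruct (IH1 (eps / 2)) as [T1 H1]; [lra|]. destruct (IH2 (eps / 2)) as [T2 H2]; [lra|].
    exists (Rmax T1 T2). intros t Ht k Hk. pose proof (Rmax_l T1 T2). pose proof (Rmax_r T1 T2).
    assert (Rabs (Y i t k - Y j t k) < eps / 2) by (apply H1; auto; lra).
    assert (Rabs (Y j t k - Y l t k) < eps / 2) by (apply H2; auto; lra).
    replace (Y i t k - Y l t k) with ((Y i t k - Y j t k) + (Y j t k - Y l t k)) by ring.
    eapply Rle_lt_trans; [apply Rabs_triang | lra].
Qed.

Lemma vnorm_sub_mean_le q N (Y : nat -> vec) i e : (0 < N)%nat ->
  (forall j k, (j < N)%nat -> (k < q)%nat -> Rabs (Y i k - Y j k) <= e) ->
  vnorm q (vsub (Y i) (fun k => / INR N * sumR N (fun j => Y j k))) <= INR q * e.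
Proof.
  intros HN H. assert (HNpos : 0 < INR N) by (apply lt_0_INR; lia).
  eapply Rle_trans; [apply vnorm_le_l1 | apply l1_le_bound]. intros k Hk.
  replace (vsub (Y i) _ k) with (/ INR N * sumR N (fun j => Y i k - Y j k))
    by (unfold vsub; rewrite sumR_minus, sumR_const; field; lra).
  rewrite Rabs_mult, Rabs_right by (apply Rle_ge, Rlt_le, Rinv_0_lt_compat; lra).
  apply (Rmult_le_reg_l (INR N)); [lra|]. rewrite <- Rmult_assoc, Rinv_r, Rmult_1_l by lra.
  eapply Rle_trans; [apply Rabs_sumR|]. rewrite <- sumR_const.
  apply sumR_le. intros j Hj. now apply H.
Qed.

Section Closed_loop.

Variables (n q N E : nat) (f : vec -> vec -> vec) (h : vec -> vec)
  (a : nat -> nat -> R) (src dst : nat -> nat)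
  (m : nat -> nat) (psi phi : nat -> vec -> vec -> vec) (delta : nat -> R)
  (x eta : nat -> R -> vec) (kappa : nat -> R -> R) (M : R).

Local Notation b := (incidence a src dst).
Local Notation rho := (rho_sig q N (incidence a src dst) h x).
Local Notation u := (u_sig q N E (incidence a src dst) h phi x eta kappa).

Hypothesis Hf : loc_lipschitz2 n q n f.
Hypothesis Hh : C1_map n q h.
Hypothesis Hedges : forall g, (g < E)%nat ->
  (src g < N)%nat /\ (dst g < N)%nat /\ src g <> dst g /\ a (src g) (dst g) > 0.
Hypothesis Hphi : forall g, (g < E)%nat -> continuous_map2 (m g) q q (phi g).
Hypothesis Hdelta : forall g, (g < E)%nat -> delta g > 0.
Hypothesis Hsol : closed_loop_solution n q N E f h b m psi phi delta x eta kappa.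
Hypothesis Hx_bnd : forall t j k, t >= 0 -> (j < N)%nat -> (k < n)%nat -> Rabs (x j t k) <= M.
Hypothesis Heta_bnd : forall t g k, t >= 0 -> (g < E)%nat -> (k < m g)%nat -> Rabs (eta g t k) <= M.
Hypothesis Hkappa_bnd : forall t g, t >= 0 -> (g < E)%nat -> Rabs (kappa g t) <= M.

Lemma incidence_bounded : exists Cb, forall g j, (g < E)%nat -> Rabs (b j g) <= Cb.
Proof.
  destruct (uniform_bound_below (fun g B => forall j, Rabs (b j g) <= B) E) as [Cb HCb].
  - intros g B B' H HB j. eapply Rle_trans; [apply H | exact HB].
  - intros g _. exists (sqrt (a (src g) (dst g))). intros j. apply Rabs_incidence_le.
  - exists Cb. intros g j Hg. now apply HCb.
Qed.

Lemma output_bounded_on_box : exists Bh, forall z, inbox n M z ->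
  forall k, (k < q)%nat -> Rabs (h z k) <= Bh.
Proof.
  destruct (uniform_bound_below (fun k B => forall z, inbox n M z -> Rabs (h z k) <= B) q)
    as [Bh HBh].
  - intros k B B' H HB z Hz. eapply Rle_trans; [apply H, Hz | exact HB].
  - intros k Hk.
    apply (box_local_to_uniform n (fun z B => Rabs (h z k) <= B)); [intros z B B'; lra|].
    intros z. destruct (C1_locally_lipschitz n (fun z => h z k) (Hh k Hk) z) as (r & L & Hr & HL & H).
    exists r, (Rabs (h z k) + L * r). split; [exact Hr|]. intros y Hy.
    assert (Hyz : vnorm n (vsub y z) < r) by (eapply Rle_lt_trans; [apply vnorm_le_l1 | exact Hy]).
    specialize (H y Hyz). pose proof (vnorm_nonneg n (vsub y z)).
    replace (h y k) with (h z k + (h y k - h z k)) by ring.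
    eapply Rle_trans; [apply Rabs_triang|]. apply Rplus_le_compat_l.
    eapply Rle_trans; [exact H | apply Rmult_le_compat_l; lra].
  - exists Bh. intros z Hz k Hk. now apply HBh.
Qed.

Lemma rho_bounded : exists Mr, forall t g k, t >= 0 -> (g < E)%nat -> (k < q)%nat ->
  Rabs (rho g t k) <= Mr.
Proof.
  destruct incidence_bounded as [Cb HCb]. destruct output_bounded_on_box as [Bh HBh].
  exists (INR N * (Cb * Bh)). intros t g k Ht Hg Hk.
  unfold rho_sig. eapply Rle_trans; [apply Rabs_sumR|]. rewrite <- sumR_const.
  apply sumR_le. intros j Hj. rewrite Rabs_mult.
  apply Rmult_le_compat; try apply Rabs_pos; [now apply HCb|].
  apply HBh; [intros k' Hk'; now apply Hx_bnd | exact Hk].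
Qed.

Lemma input_bounded : exists Mu, forall t j k, t >= 0 -> (k < q)%nat -> Rabs (u j t k) <= Mu.
Proof.
  destruct incidence_bounded as [Cb HCb]. destruct rho_bounded as [Mr HMr].
  destruct (uniform_bound_below (fun g B => forall e r, inbox (m g) M e -> inbox q Mr r ->
      forall k, (k < q)%nat -> Rabs (phi g e r k) <= B) E) as [Bp HBp].
  - intros g B B' H HB e r He Hr k Hk. eapply Rle_trans; [apply H; auto | exact HB].
  - intros g Hg. apply bounded_on_boxes2;
      [apply continuous_map2_locally_bounded | apply continuous_map2_respects_agree]; auto.
  - exists (INR E * (Cb * (Bp + M * Mr))). intros t j k Ht Hk.
    unfold u_sig. rewrite Rabs_Ropp. eapply Rle_trans; [apply Rabs_sumR|]. rewrite <- sumR_const.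
    apply sumR_le. intros g Hg. rewrite Rabs_mult.
    apply Rmult_le_compat; try apply Rabs_pos; [now apply HCb|].
    eapply Rle_trans; [apply Rabs_triang|]. rewrite Rabs_mult.
    apply Rplus_le_compat; [|apply Rmult_le_compat; try apply Rabs_pos; auto].
    apply HBp; auto; intros k' Hk'; auto.
Qed.

Lemma state_lipschitz : exists L, forall j k t s, (j < N)%nat -> (k < n)%nat -> 1 <= t -> 1 <= s ->
  Rabs (x j t k - x j s k) <= L * Rabs (t - s).
Proof.
  destruct input_bounded as [Mu HMu].
  destruct (bounded_on_boxes2 n q n f (loc_lipschitz2_locally_bounded n q n f Hf)
              (loc_lipschitz2_respects_agree n q n f Hf) M Mu) as [Bf HBf].
  exists Bf. intros j k t s Hj Hk Ht Hs.
  apply (lipschitz_of_bounded_deriv (fun c => x j c k) (fun c => f (x j c) (u j c) k)); auto.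
  - intros c Hc. now apply (Hsol c Hc).
  - intros c Hc. apply HBf; auto; intros k' Hk'; [apply Hx_bnd | apply HMu]; auto; lra.
Qed.

Lemma output_ucont j k : (j < N)%nat -> (k < q)%nat -> ucont_tail (fun t => h (x j t) k).
Proof.
  intros Hj Hk. destruct state_lipschitz as [L HL].
  apply (ucont_tail_comp_box n (fun z => h z k) (x j) M L).
  - apply C1_continuous_l1, Hh, Hk.
  - intros t Ht k' Hk'. apply Hx_bnd; auto; lra.
  - intros k' t s Hk'. now apply HL.
Qed.

Lemma rho_sq_ucont g : (g < E)%nat -> ucont_tail (fun t => dot q (rho g t) (rho g t)).
Proof.
  intros Hg. destruct rho_bounded as [Mr HMr].
  assert (Hrho : forall k, (k < q)%nat -> ucont_tail (fun t => rho g t k)).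
  { intros k Hk. apply (ucont_tail_sum N (fun j t => b j g * h (x j t) k)). intros j Hj.
    apply ucont_tail_scal, output_ucont; assumption. }
  apply (ucont_tail_sum q (fun k t => rho g t k * rho g t k)). intros k Hk.
  apply ucont_tail_mult with (A := Mr); auto; intros t Ht; apply HMr; auto; lra.
Qed.

Lemma rho_sq_vanishes g : (g < E)%nat -> forall eps, eps > 0 ->
  exists T, forall t, t >= T -> dot q (rho g t) (rho g t) < eps.
Proof.
  intros Hg. apply (barbalat (kappa g) _ (delta g) M (Hdelta g Hg)).
  - intros t Ht. now apply (Hsol t Ht).
  - intros t. apply dot_self_nonneg.
  - now apply rho_sq_ucont.
  - intros t Ht. now apply Hkappa_bnd.
Qed.

Lemma edge_outputs_merging g : (g < E)%nat -> merging q (fun j t => h (x j t)) (dst g) (src g).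
Proof.
  intros Hg eps Heps. destruct (Hedges g Hg) as (Hs & Hd & Hne & Ha).
  set (c := sqrt (a (src g) (dst g))). assert (Hc : c > 0) by (apply sqrt_lt_R0; lra).
  destruct (rho_sq_vanishes g Hg (eps * c * (eps * c))) as [T HT];
    [apply Rmult_lt_0_compat; apply Rmult_lt_0_compat; lra|].
  exists T. intros t Ht k Hk.
  assert (Hnorm : vnorm q (rho g t) < eps * c).
  { unfold vnorm. rewrite <- (sqrt_square (eps * c)) by nra.
    apply sqrt_lt_1_alt. split; [apply dot_self_nonneg | now apply HT]. }
  pose proof (Rabs_le_vnorm q (rho g t) k Hk) as Hcomp.
  replace (rho g t k) with (c * (h (x (dst g) t) k - h (x (src g) t) k)) in Hcomp
    by (symmetry; apply (incidence_sum N a src dst g (fun j => h (x j t) k)); auto).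
  rewrite Rabs_mult, (Rabs_right c) in Hcomp by lra.
  pose proof (Rabs_pos (h (x (dst g) t) k - h (x (src g) t) k)). nra.
Qed.

End Closed_loop.

Theorem corollary1
  (n q N E : nat) (f : vec -> vec -> vec) (h : vec -> vec) (sigma : R)
  (a : nat -> nat -> R) (src dst : nat -> nat)
  (m : nat -> nat) (psi phi : nat -> vec -> vec -> vec) (delta : nat -> R)
  (x eta : nat -> R -> vec) (kappa : nat -> R -> R) :
  loc_lipschitz2 n q n f ->
  C1_map n q h ->
  iOFP n q f h sigma ->
  sym_nonneg N a ->
  graph_connected N a ->
  edge_enum N E a src dst ->
  (forall g, (g < E)%nat -> passive_edge (m g) q (psi g) (phi g)) ->
  (forall g, (g < E)%nat -> delta g > 0) ->
  closed_loop_solution n q N E f h (incidence a src dst) m psi phi delta x eta kappa ->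
  bounded_solution n N E m x eta kappa ->
  forall i, (i < N)%nat ->
    forall eps, eps > 0 -> exists T, forall t, t >= T ->
      vnorm q (vsub (h (x i t)) (ybar N h x t)) < eps.
Proof.
  intros Hf Hh _ _ Hconn [Hedges [Hcover _]] Hpass Hdelta Hsol [M HM] i Hi eps Heps.
  pose (Y j t := h (x j t)).
  assert (Hedge : forall g, (g < E)%nat -> merging q Y (dst g) (src g)).
  { intros g Hg. apply (edge_outputs_merging n q N E f h a src dst m psi phi delta x eta kappa M);
      auto; [intros; now apply Hpass | intros t j k Ht | intros t g' k Ht | intros t g' Ht];
      intros; now apply HM. }
  assert (Hmerge : forall j, (j < N)%nat -> merging q Y i j).
  { intros j Hj. eapply merging_clos_refl_trans; [|exact (Hconn i j Hi Hj)].
    intros v w (Hv & Hw & Hvw & Ha).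
    destruct (Hcover v w Hv Hw Hvw Ha) as (g & Hg & [[<- <-] | [<- <-]]);
      [apply merging_sym|]; now apply Hedge. }
  pose (e := eps / (INR q + 1)). pose proof (pos_INR q) as Hq.
  assert (He : e > 0) by (apply Rdiv_lt_0_compat; lra).
  destruct (uniform_bound_below (fun j T => forall t, t >= T ->
      forall k, (k < q)%nat -> Rabs (Y i t k - Y j t k) < e) N) as [T HT].
  - intros j T T' H HT' t Ht. apply H. lra.
  - intros j Hj. now apply Hmerge.
  - exists T. intros t Ht. eapply Rle_lt_trans.
    + apply (vnorm_sub_mean_le q N (fun j => Y j t) i e); [lia|].
      intros j k Hj Hk. left. now apply HT.
    + apply (Rmult_lt_reg_r (INR q + 1)); [lra|]. unfold e. field_simplify; nra.
Qed.
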